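(* Let $2\le k\le mn$, let $p_x\in\mathcal{P}_k$, let $\mathcal{D}\subseteq\mathbb{C}$, and let $F:\mathcal{D}\rightarrow M_{m\times n}(\mathbb{C})$ be defined by $F(z)=\sum_{i=0}^{s}A_i z^i$ with $A_i\in M_{m\times n}(\mathbb{C})$. Let $\mathcal{Z}_{p_x}(\mathcal{D})=\{z\in\mathcal{D} : F(z)\text{ has repeated zeros with respect to } p_x\}$. Then either $\mathcal{Z}_{p_x}(\mathcal{D})=\mathcal{D}$ or $\mathcal{Z}_{p_x}(\mathcal{D})$ is finite.
   Context: $M_{m\times n}(\mathbb{C})$ is the set of $m\times n$ complex matrices. Let $\mathbb{C}_k[x]$ be the set of complex polynomials of degree $k$ and $\mathbb{C}^k_{\mathrm{sym}}$ the set of unordered $k$-tuples of complex numbers; $r_k:\mathbb{C}_k[x]\to\mathbb{C}^k_{\mathrm{sym}}$ sends a polynomial to the unordered $k$-tuple of its roots (with multiplicity). $\mathcal{P}_k$ is the set of maps $p_x:M_{m\times n}(\mathbb{C})\to\mathbb{C}_k[x]$ of the form $p_x(A)=x^k+\sum_{i=1}^{k}q_i(A)x^{i-1}$, where each $q_i(A)$ is a polynomial function of the entries of $A$, such that $r_k(p_x(M_{m\times n}(\mathbb{C})))=\mathbb{C}^k_{\mathrm{sym}}$. $A$ has repeated zeros with respect to $p_x$ if the polynomial $p_x(A)$ (in $x$) has a root of multiplicity at least $2$, and distinct zeros otherwise. *)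

(* The complex numbers are modelled as R[i] = complex R for
   an arbitrary model R : realType of the real numbers. *)
From HB Require Import structures.
From mathcomp Require Import all_boot all_order all_algebra.
From mathcomp Require Import reals.
From mathcomp Require Import complex.
From mathcomp Require mpoly.
Set Implicit Arguments. Unset Strict Implicit. Unset Printing Implicit Defensive.
Import Order.TTheory GRing.Theory Num.Theory.
Local Open Scope ring_scope.

Definition mx_polyfun (C : comNzRingType) (m n : nat) (q : 'M[C]_(m, n) -> C) : Prop :=
  exists P : mpoly.mpoly (m * n) C,
    forall A : 'M[C]_(m, n), q A = mpoly.meval (fun i => mxvec A 0 i) P.

(* r_k(p(A)) = the unordered k-tuple s (given as a sequence of size k):
   p(A) is monic of degree k with roots s counted with multiplicity,
   i.e. p(A) = prod_{a in s} (x - a). *)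
Definition roots_are (C : comNzRingType) (p : {poly C}) (s : seq C) : Prop :=
  p = \prod_(a <- s) ('X - a%:P).

Definition in_Pk (C : comNzRingType) (m n k : nat)
    (p : 'M[C]_(m, n) -> {poly C}) : Prop :=
  (exists q : 'I_k -> 'M[C]_(m, n) -> C,
      (forall i, mx_polyfun (q i)) /\
      (forall A, p A = 'X^k + \sum_(i < k) q i A *: 'X^i))
  /\ (forall s : seq C, size s = k -> exists A, roots_are (p A) s).

Definition repeated_zeros (C : idomainType) (m n : nat)
    (p : 'M[C]_(m, n) -> {poly C}) (A : 'M[C]_(m, n)) : Prop :=
  exists x : C, (('X - x%:P) ^+ 2 %| p A)%R.

Definition Zset (C : idomainType) (m n s : nat) (p : 'M[C]_(m, n) -> {poly C})
    (D : C -> Prop) (Acoef : 'I_s.+1 -> 'M[C]_(m, n)) : C -> Prop :=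
  fun z => D z /\ repeated_zeros p (\sum_(i < s.+1) z ^+ i *: Acoef i).

(* The coefficients of p_x(F(z)) are polynomial functions of the entries of
   F(z), hence polynomials in z.  So p_x(F(z)) is the specialisation at z of a
   monic polynomial G with coefficients in C[z].  A polynomial has a repeated
   root iff it is not separable, iff its resultant with its derivative
   vanishes; and since G and G' have leading coefficients 1 and deg G, which
   survive every specialisation in characteristic 0, Res(G, G') specialises
   to Res(p_x(F(z)), p_x(F(z))').  Hence the z with repeated zeros are the
   roots of the single polynomial Res(G, G') in C[z]: all of C, or finitely
   many. *)
From mathcomp Require Import all_boot all_order all_algebra.
From mathcomp Require Import separable.
From mathcomp Require Import reals complex.
From mathcomp Require mpoly.
Set Implicit Arguments. Unset Strict Implicit. Unset Printing Implicit Defensive.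
Import GRing.Theory Num.Theory.
Local Open Scope ring_scope.

Section PolynomialEntries.
Variable C : comNzRingType.

Lemma horner_meval_polyC N (E : 'I_N -> {poly C}) (P : mpoly.mpoly N C) z :
  (mpoly.meval E (mpoly.map_mpoly polyC P)).[z] =
  mpoly.meval (fun l => (E l).[z]) P.
Proof.
rewrite !mpoly.mevalE (perm_big _ (mpoly.msupp_map_mpoly _ (@polyC_inj _))).
rewrite horner_sum; apply: eq_bigr => mm _.
rewrite mpoly.mcoeff_map_mpoly hornerM hornerC horner_prod.
by congr (_ * _); apply: eq_bigr => l _; rewrite horner_exp.
Qed.

Lemma mxvec_matrix_poly m n s (A : 'I_s.+1 -> 'M[C]_(m, n)) z l :
  mxvec (\sum_(i < s.+1) z ^+ i *: A i) 0 l =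
  (\sum_(i < s.+1) mxvec (A i) 0 l *: 'X^i).[z].
Proof.
rewrite linear_sum summxE horner_sum; apply: eq_bigr => i _.
by rewrite linearZ mxE hornerZ hornerXn mulrC.
Qed.

Lemma mx_polyfun_matrix_poly m n s (q : 'M[C]_(m, n) -> C)
    (A : 'I_s.+1 -> 'M[C]_(m, n)) :
  mx_polyfun q ->
  exists Q : {poly C}, forall z, q (\sum_(i < s.+1) z ^+ i *: A i) = Q.[z].
Proof.
move=> [P qP]; pose E l := \sum_(i < s.+1) mxvec (A i) 0 l *: 'X^i.
exists (mpoly.meval E (mpoly.map_mpoly polyC P)) => z.
rewrite qP horner_meval_polyC.
by apply: mpoly.meval_eq => l; rewrite mxvec_matrix_poly.
Qed.

End PolynomialEntries.

Lemma lead_coef_deriv_monic (R : nzRingType) (p : {poly R}) :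
  p \is monic -> ((size p).-1%:R : R) != 0 ->
  lead_coef p^`() = (size p).-1%:R.
Proof.
move=> /monicP p1 d_neq0; set d := (size p).-1 in d_neq0 *.
have d_gt0 : (0 < d)%N by rewrite lt0n; apply: contraNneq d_neq0 => ->.
have p_neq0 : p != 0 by rewrite -lead_coef_eq0 p1 oner_neq0.
have size_p : size p = d.+1 by rewrite prednK // size_poly_gt0.
have coef_p' : p^`()`_d.-1 = d%:R by rewrite coef_deriv prednK // -p1 lead_coefE.
have size_p' : size p^`() = d.
  apply/eqP; rewrite eqn_leq -ltnS -size_p lt_size_deriv //=.
  rewrite -(prednK d_gt0) ltnNge; apply: contra d_neq0 => /leq_sizeP.
  by move=> /(_ _ (leqnn _)); rewrite coef_p' => ->.
by rewrite lead_coefE size_p'.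
Qed.

Lemma size_sum_scale_Xn_le (R : nzRingType) k (c : 'I_k -> R) :
  (size (\sum_(j < k) c j *: 'X^j)%R <= k)%N.
Proof.
apply: leq_trans (size_sum _ _ _) _; apply/bigmax_leqP => j _.
by apply: leq_trans (size_scale_leq _ _) _; rewrite size_polyXn.
Qed.

Lemma size_Xn_add_lower (R : nzRingType) k (c : 'I_k -> R) :
  size ('X^k + \sum_(j < k) c j *: 'X^j) = k.+1.
Proof. by rewrite size_polyDl size_polyXn // ltnS size_sum_scale_Xn_le. Qed.

Lemma monic_Xn_add_lower (R : nzRingType) k (c : 'I_k -> R) :
  'X^k + \sum_(j < k) c j *: 'X^j \is monic.
Proof.
apply/monicP; rewrite lead_coefDl ?lead_coefXn //.
by rewrite size_polyXn ltnS size_sum_scale_Xn_le.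
Qed.

Lemma map_Xn_add_lower (aR rR : nzRingType) (f : {rmorphism aR -> rR}) k
    (c : 'I_k -> aR) :
  map_poly f ('X^k + \sum_(j < k) c j *: 'X^j) =
  'X^k + \sum_(j < k) f (c j) *: 'X^j.
Proof.
rewrite raddfD raddf_sum /= map_polyXn; congr (_ + _).
by apply: eq_bigr => j _; rewrite map_polyZ map_polyXn.
Qed.

Section ClosedField.
Variable C : closedFieldType.
Implicit Types (f r : {poly C}) (G : {poly {poly C}}).

Lemma repeated_rootP f :
  (exists x, ('X - x%:P) ^+ 2 %| f) <-> ~~ separable_poly f.
Proof.
split=> [[x sq_f] | ].
  by apply/negP => sep_f; rewrite separable_nosquare ?size_XsubC in sq_f.
rewrite unlock coprimep_def => /closed_rootP[x].
rewrite root_gcd => /andP[/factor_theorem[g ->]].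
rewrite derivM derivXsubC mulr1 rootE !hornerE subrr mulr0 add0r.
by move=> /factor_theorem[h ->]; exists x; rewrite -mulrA -expr2 dvdp_mull.
Qed.

Lemma separable_resultant f :
  f != 0 -> separable_poly f = (resultant f f^`() != 0).
Proof.
move=> f_neq0; rewrite unlock coprimep_def resultant_eq0 -leqNgt eqn_leq.
by rewrite size_poly_gt0 gcdp_eq0 (negPf f_neq0) andbT.
Qed.

Lemma roots_everywhere_or_finite r :
  (forall z, root r z) \/ exists l : seq C, forall z, root r z -> z \in l.
Proof.
have [-> | r_neq0] := eqVneq r 0; first by left => z; rewrite root0.
right; have [l r_def] := closed_field_poly_normal r; exists l => z.
by rewrite r_def rootZ ?lead_coef_eq0 // root_prod_XsubC.
Qed.

Lemma horner_resultant_deriv G z :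
    G \is monic -> ((size G).-1%:R : C) != 0 ->
  let Gz := map_poly (horner_eval z) G in
  (resultant G G^`()).[z] = resultant Gz Gz^`().
Proof.
move=> /[dup] G_monic /monicP G1 deg_neq0 Gz.
have deg_neq0' : ((size G).-1%:R : {poly C}) != 0.
  by rewrite -polyC_natr polyC_eq0.
rewrite /Gz deriv_map -[LHS]/(horner_eval z _).
rewrite map_resultant ?G1 ?rmorph1 ?oner_neq0 //.
by rewrite lead_coef_deriv_monic // rmorph_nat.
Qed.

Lemma monic_family_repeated_root_locus G :
    G \is monic -> ((size G).-1%:R : C) != 0 ->
  let Gz z := map_poly (horner_eval z) G in
  (forall z, ~~ separable_poly (Gz z)) \/
  exists l : seq C, forall z, ~~ separable_poly (Gz z) -> z \in l.
Proof.
move=> G_monic deg_neq0 Gz.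
have root_res z : root (resultant G G^`()) z = ~~ separable_poly (Gz z).
  rewrite separable_resultant ?monic_neq0 ?monic_map // negbK.
  by rewrite /root horner_resultant_deriv.
have [all_roots | [l fin_roots]] :=
  roots_everywhere_or_finite (resultant G G^`()).
  by left => z; rewrite -root_res.
by right; exists l => z; rewrite -root_res; apply: fin_roots.
Qed.

End ClosedField.

Theorem theorem5p4 (R : realType) (m n k s : nat)
    (p : 'M[R[i]]_(m, n) -> {poly R[i]})
    (D : R[i] -> Prop) (Acoef : 'I_s.+1 -> 'M[R[i]]_(m, n)) :
  (2 <= k)%N -> (k <= m * n)%N -> in_Pk k p ->
  (forall z, Zset p D Acoef z <-> D z) \/
  (exists l : seq R[i], forall z, Zset p D Acoef z -> z \in l).
Proof.
move=> k_ge2 _ [[q [q_polyfun p_def]] _].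
have [Q qQ] := fin_all_exists
  (fun j => mx_polyfun_matrix_poly Acoef (q_polyfun j)).
pose G : {poly {poly R[i]}} := 'X^k + \sum_(j < k) Q j *: 'X^j.
have pG z : map_poly (horner_eval z) G = p (\sum_(i < s.+1) z ^+ i *: Acoef i).
  rewrite map_Xn_add_lower p_def; congr (_ + _).
  by apply: eq_bigr => j _; rewrite qQ.
have deg_neq0 : ((size G).-1%:R : R[i]) != 0.
  by rewrite size_Xn_add_lower pnatr_eq0 -lt0n (leq_trans _ k_ge2).
have [rep_all | [l rep_fin]] :=
  monic_family_repeated_root_locus (monic_Xn_add_lower Q) deg_neq0.
  left => z; split => [[] // | Dz]; split => //.
  by apply/repeated_rootP; rewrite -pG; apply: rep_all.
by right; exists l => z [_ /repeated_rootP]; rewrite -pG; apply: rep_fin.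
Qed.
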